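(* For $i\in[m]$ let $N_i=\begin{pmatrix}a_i&b_i\\ -\infty&d_i\end{pmatrix}$ with $a_i,b_i,d_i\in\mathbb{R}$. Then $N_i\otimes N_j=N_j\otimes N_i$ for all $i,j\in[m]$ if and only if one of the following holds: (i) $a_i\ge d_i$ for all $i\in[m]$, and there is $c\in\mathbb{R}$ with $c=b_k-a_k$ for every $k$ with $a_k>d_k$ and $c\ge b_k-a_k$ for every $k$ with $a_k=d_k$; or (ii) $a_i\le d_i$ for all $i\in[m]$, and there is $c\in\mathbb{R}$ with $c=d_k-b_k$ for every $k$ with $a_k<d_k$ and $c\le d_k-b_k$ for every $k$ with $a_k=d_k$.
   Context: The max-plus algebra is $\mathbb{R}_{\max}=\mathbb{R}\cup\{-\infty\}$ with $a\oplus b=\max\{a,b\}$ and $a\otimes b=a+b$ (additive identity $-\infty$, multiplicative identity $0$). Matrix products are defined as in linear algebra with these operations: $(A\otimes B)_{jk}=\max_l(A_{jl}+B_{lk})$. *)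

From HB Require Import structures.
From mathcomp Require Import all_boot all_order all_algebra.
From mathcomp Require Import reals.
Set Implicit Arguments. Unset Strict Implicit. Unset Printing Implicit Defensive.
Import Order.TTheory GRing.Theory Num.Theory.
Local Open Scope ring_scope.

(* The max-plus semiring R_max = R ∪ {-oo}: [None] encodes -oo, [Some x] encodes x. *)
Definition rmax (R : realType) := option R.

Definition mp_add (R : realType) (x y : rmax R) : rmax R :=
  match x, y with
  | None, _ => y
  | _, None => x
  | Some a, Some b => Some (Num.max a b)
  end.

Definition mp_mul (R : realType) (x y : rmax R) : rmax R :=
  match x, y with
  | Some a, Some b => Some (a + b)
  | _, _ => None
  end.

Definition mp_mulmx (R : realType) (p q r : nat)
  (A : 'M[rmax R]_(p, q)) (B : 'M[rmax R]_(q, r)) : 'M[rmax R]_(p, r) :=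
  \matrix_(j < p, k < r) \big[@mp_add R/None]_(l < q) mp_mul (A j l) (B l k).

Definition Nmat (R : realType) (a b d : R) : 'M[rmax R]_2 :=
  \matrix_(j < 2, k < 2)
    if (j : nat) == 0%N then (if (k : nat) == 0%N then Some a else Some b)
    else (if (k : nat) == 0%N then None else Some d).

(* Commutation of two such matrices only constrains the top-right entry, and
   amounts to max(a + b', b + d') = max(a' + b, b' + d).  A case analysis on
   the maxima shows that a strictly upper-dominant matrix (d < a) cannot commute
   with a strictly lower-dominant one (a' < d'); two strictly upper-dominant
   matrices commute iff they share the slope b - a, and a scalar-diagonal one
   (a' = d') commutes with them iff its slope b' - a' is at most that common
   value.  The lower-dominant case is symmetric with slope d - b. *)

From HB Require Import structures.
From mathcomp Require Import all_boot all_order all_algebra.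
From mathcomp Require Import reals.
From mathcomp Require Import lra.
Set Implicit Arguments. Unset Strict Implicit. Unset Printing Implicit Defensive.
Import Order.TTheory GRing.Theory Num.Theory.
Local Open Scope ring_scope.

Section NmatProduct.
Variable R : realType.
Implicit Types a b d c : R.

Lemma mp_mulmx_Nmat a b d a' b' d' :
  mp_mulmx (Nmat a b d) (Nmat a' b' d') =
  \matrix_(j < 2, k < 2)
    if (j : nat) == 0%N then
      (if (k : nat) == 0%N then Some (a + a') else Some (Num.max (a + b') (b + d')))
    else (if (k : nat) == 0%N then None else Some (d + d')).
Proof.
apply/matrixP => i j; rewrite !mxE !big_ord_recl big_ord0 /= !mxE /=.
by case: i => [[|[|i]] Hi] //=; case: j => [[|[|j]] Hj].
Qed.

Definition Nmat_comm a b d a' b' d' :=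
  Num.max (a + b') (b + d') = Num.max (a' + b) (b' + d).

Lemma Nmat_commP a b d a' b' d' :
  mp_mulmx (Nmat a b d) (Nmat a' b' d') = mp_mulmx (Nmat a' b' d') (Nmat a b d)
  <-> Nmat_comm a b d a' b' d'.
Proof.
rewrite !mp_mulmx_Nmat; split.
  by move/matrixP/(_ ord0 (lift ord0 ord0)); rewrite !mxE /= => -[].
move=> comm; apply/matrixP => i j; rewrite !mxE.
by case: i => [[|[|i]] Hi] //=; case: j => [[|[|j]] Hj] //=; rewrite ?comm // addrC.
Qed.

Ltac case_max := rewrite /Nmat_comm;
  repeat match goal with |- context [Num.max ?x ?y] => case: (leP x y) => ? end.

Lemma Nmat_comm_upper_lower a b d a' b' d' :
  Nmat_comm a b d a' b' d' -> d < a -> a' < d' -> False.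
Proof. by case_max; lra. Qed.

Lemma Nmat_comm_upper_slope a b d a' b' d' :
  Nmat_comm a b d a' b' d' -> d < a -> d' < a' -> b - a = b' - a'.
Proof. by case_max; lra. Qed.

Lemma Nmat_comm_upper_diag a b d a' b' d' :
  Nmat_comm a b d a' b' d' -> d < a -> a' = d' -> b' - a' <= b - a.
Proof. by case_max; lra. Qed.

Lemma Nmat_comm_lower_slope a b d a' b' d' :
  Nmat_comm a b d a' b' d' -> a < d -> a' < d' -> d - b = d' - b'.
Proof. by case_max; lra. Qed.

Lemma Nmat_comm_lower_diag a b d a' b' d' :
  Nmat_comm a b d a' b' d' -> a < d -> a' = d' -> d - b <= d' - b'.
Proof. by case_max; lra. Qed.

Definition upper_slope c a b d := d < a /\ c = b - a \/ a = d /\ b - a <= c.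
Definition lower_slope c a b d := a < d /\ c = d - b \/ a = d /\ c <= d - b.

Lemma Nmat_comm_upper c a b d a' b' d' :
  upper_slope c a b d -> upper_slope c a' b' d' -> Nmat_comm a b d a' b' d'.
Proof. by move=> [[? ?]|[? ?]] [[? ?]|[? ?]]; case_max; lra. Qed.

Lemma Nmat_comm_lower c a b d a' b' d' :
  lower_slope c a b d -> lower_slope c a' b' d' -> Nmat_comm a b d a' b' d'.
Proof. by move=> [[? ?]|[? ?]] [[? ?]|[? ?]]; case_max; lra. Qed.

Lemma upper_slope_of_le c a b d :
  d <= a -> (d < a -> c = b - a) -> (a = d -> b - a <= c) -> upper_slope c a b d.
Proof.
rewrite le_eqVlt => /orP[/eqP eq_da | lt_da] strict diag; last by left; split; auto.
by right; split; [|apply: diag]; rewrite eq_da.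
Qed.

Lemma lower_slope_of_le c a b d :
  a <= d -> (a < d -> c = d - b) -> (a = d -> c <= d - b) -> lower_slope c a b d.
Proof.
rewrite le_eqVlt => /orP[/eqP eq_ad | lt_ad] strict diag; last by left; split; auto.
by right; split; last apply: diag.
Qed.

End NmatProduct.

Section CommutingFamily.
Variables (R : realType) (m : nat) (a b d : 'I_m -> R).
Hypothesis comm : forall i j, Nmat_comm (a i) (b i) (d i) (a j) (b j) (d j).

Lemma commuting_family_upper i0 : d i0 < a i0 ->
  (forall i, d i <= a i) /\
  exists c, (forall k, d k < a k -> c = b k - a k) /\
            (forall k, a k = d k -> b k - a k <= c).
Proof.
move=> lt_i0; split.
  by move=> i; rewrite leNgt; apply/negP => /(Nmat_comm_upper_lower (comm i0 i) lt_i0).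
exists (b i0 - a i0); split => k.
  exact: Nmat_comm_upper_slope (comm i0 k) lt_i0.
exact: Nmat_comm_upper_diag (comm i0 k) lt_i0.
Qed.

Lemma commuting_family_lower :
  exists c, (forall k, a k < d k -> c = d k - b k) /\
            (forall k, a k = d k -> c <= d k - b k).
Proof.
case: (pickP (fun i => a i < d i)) => [i0 lt_i0 | no_strict].
  exists (d i0 - b i0); split => k.
    exact: Nmat_comm_lower_slope (comm i0 k) lt_i0.
  exact: Nmat_comm_lower_diag (comm i0 k) lt_i0.
exists (\big[Order.min/0]_k (d k - b k)); split => k.
  by rewrite no_strict.
by move=> _; exact: bigmin_le.
Qed.

End CommutingFamily.

Theorem mainTheorem20 (R : realType) (m : nat) (a b d : 'I_m -> R) :
  (forall i j : 'I_m,
     mp_mulmx (Nmat (a i) (b i) (d i)) (Nmat (a j) (b j) (d j))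
     = mp_mulmx (Nmat (a j) (b j) (d j)) (Nmat (a i) (b i) (d i)))
  <->
  (((forall i, d i <= a i) /\
     exists c : R, (forall k, d k < a k -> c = b k - a k) /\
                   (forall k, a k = d k -> b k - a k <= c))
   \/
   ((forall i, a i <= d i) /\
     exists c : R, (forall k, a k < d k -> c = d k - b k) /\
                   (forall k, a k = d k -> c <= d k - b k))).
Proof.
split.
- move=> commmx; have comm i j := proj1 (Nmat_commP _ _ _ _ _ _) (commmx i j).
  case: (pickP (fun i => d i < a i)) => [i0 lt_i0 | no_upper].
    by left; exact: commuting_family_upper comm i0 lt_i0.
  have le_ad i : a i <= d i by rewrite leNgt no_upper.
  by right; split; last exact: commuting_family_lower comm.
- move=> [[le_da [c [strict diag]]] | [le_ad [c [strict diag]]]] i j; apply/Nmat_commP.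
  + by apply: (@Nmat_comm_upper _ c); apply: upper_slope_of_le (le_da _) (strict _) (diag _).
  + by apply: (@Nmat_comm_lower _ c); apply: lower_slope_of_le (le_ad _) (strict _) (diag _).
Qed.
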